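(* Let $\sigma$ be a rank-one ruled submanifold whose ruling distribution has degree one at every $t\in I$, and suppose $\rho_{t}X_{m-1}(t)\neq0$ for all $t\in I$. Let $\beta$ be the striction hypersurface of $\sigma$, as defined below. Then every point of the striction hypersurface is a singular point of $\sigma$. That is, $\sigma$ is singular at $(t,u^{1},\dotsc,u^{m-2},f(t,u^{1},\dotsc,u^{m-2}))$ for all $(t,u^{1},\dotsc,u^{m-2})\in I\times\mathbb{R}^{m-2}$; equivalently, $\frac{\partial\beta}{\partial t}\wedge X_{1}\wedge\dotsb\wedge X_{m-1}=0$ everywhere on $I\times\mathbb{R}^{m-2}$.
   Context: Ruled submanifold: given an open interval $I$, a smooth unit-speed curve $\gamma\colon I\to\mathbb{R}^{m+n}$ and smooth vector fields $X_{1},\dotsc,X_{m-1}$ along $\gamma$ that are orthonormal at each $t$, define $\sigma(t,u^{1},\dotsc,u^{m-1})=\gamma(t)+\sum_{j=1}^{m-1}u^{j}X_{j}(t)$ on $I\times\mathbb{R}^{m-1}$. A point is regular if $d\sigma$ is injective there and singular otherwise. Let $\mathcal{D}_{t}=\operatorname{Span}(X_{j}(t))_{j=1}^{m-1}$ and $\rho_{t}X_{j}(t)=\pi^{\perp}\dot X_{j}(t)$, where $\pi^{\perp}$ is orthogonal projection onto $\mathcal{D}_{t}^{\perp}$. The degree of $\mathcal{D}$ at $t$ is the rank of the linear map $\sum_jc_jX_j(t)\mapsto\sum_jc_j\rho_tX_j(t)$. A ruled submanifold is rank-one if at every regular point the kernel of its second fundamental form has dimension $m-1$. Striction hypersurface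 (the case $d=1$): define $$f(t,u^{1},\dotsc,u^{m-2})=-\frac{\langle\dot\gamma(t),\rho_{t}X_{m-1}(t)\rangle+\sum_{i=1}^{m-2}u^{i}\langle\dot X_{i}(t),\rho_{t}X_{m-1}(t)\rangle}{|\rho_{t}X_{m-1}(t)|^{2}}$$ and $$\beta(t,u^{1},\dotsc,u^{m-2})=\gamma(t)+\sum_{i=1}^{m-2}u^{i}X_{i}(t)+f(t,u^{1},\dotsc,u^{m-2})X_{m-1}(t).$$ This $\beta$ is the unique map of this form satisfying $\langle\partial\beta/\partial t,\rho_{t}X_{m-1}\rangle=0$. *)

From HB Require Import structures.
From mathcomp Require Import all_boot all_order all_algebra.
From mathcomp Require Import all_classical all_reals all_analysis.
Set Implicit Arguments. Unset Strict Implicit. Unset Printing Implicit Defensive.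
Import Order.TTheory GRing.Theory Num.Theory.
Import numFieldNormedType.Exports.
Local Open Scope ring_scope.

Section Ruled.
Variable R : realType.

Definition dotv (N : nat) (a b : 'rV[R]_N) : R := \sum_(i < N) a 0 i * b 0 i.

(* the open interval ]a,b[ with extended-real end points (so I may be unbounded) *)
Definition in_interval (a b : \bar R) (t : R) : Prop := (a < t%:E < b)%E.

Definition smooth_on (I : R -> Prop) (N : nat) (f : R -> 'rV[R]_N) : Prop :=
  forall (p : nat) (t : R), I t -> derivable (derive1n p f) t 1.

(* Ruled map  sigma(t, u^1..u^{m-1}) = gamma t + sum_j u^j X_j(t), with m = k.+2.
   A parameter point is x : 'rV_(k.+2); x 0 ord0 = t, x 0 (lift ord0 j) = u^j. *)
Definition ruled (k N : nat) (gamma : R -> 'rV[R]_N) (X : 'I_k.+1 -> R -> 'rV[R]_N)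
  (x : 'rV[R]_k.+2) : 'rV[R]_N :=
  gamma (x 0 ord0) + \sum_(j < k.+1) x 0 (lift ord0 j) *: X j (x 0 ord0).

(* Jacobian: row i is the partial derivative of F along the i-th coordinate;
   d F_x (a) = a *m jac F x. *)
Definition jac (M N : nat) (F : 'rV[R]_M -> 'rV[R]_N) (x : 'rV[R]_M) : 'M[R]_(M, N) :=
  \matrix_(i < M) derive F x (delta_mx 0 i).

Definition regular_pt (M N : nat) (F : 'rV[R]_M -> 'rV[R]_N) (x : 'rV[R]_M) : bool :=
  row_free (jac F x).

Definition singular_pt (M N : nat) (F : 'rV[R]_M -> 'rV[R]_N) (x : 'rV[R]_M) : bool :=
  ~~ regular_pt F x.

Definition hess (M N : nat) (F : 'rV[R]_M -> 'rV[R]_N) (x : 'rV[R]_M) (i j : 'I_M)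
  : 'rV[R]_N :=
  derive (fun y => derive F y (delta_mx 0 j)) x (delta_mx 0 i).

(* orthogonal projection onto the orthogonal complement of the row space of a
   row-free matrix J (Gram-matrix formula) *)
Definition nproj (M N : nat) (J : 'M[R]_(M, N)) (v : 'rV[R]_N) : 'rV[R]_N :=
  v - v *m J^T *m invmx (J *m J^T) *m J.

Definition sff (M N : nat) (F : 'rV[R]_M -> 'rV[R]_N) (x : 'rV[R]_M) (i j : 'I_M)
  : 'rV[R]_N := nproj (jac F x) (hess F x i j).

(* kernel of the second fundamental form, as a subspace of the tangent space
   (rows span the subspace {v = a *m jac F x | II(v, w) = 0 for all w}) *)
Definition sff_kernel (M N : nat) (F : 'rV[R]_M -> 'rV[R]_N) (x : 'rV[R]_M)
  : 'M[R]_(M, N) :=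
  ((\bigcap_(j < M) kermx (\matrix_(i < M) sff F x i j))%MS *m jac F x).

Definition rank_one (I : R -> Prop) (k N : nat) (F : 'rV[R]_k.+2 -> 'rV[R]_N) : Prop :=
  forall x : 'rV[R]_k.+2, I (x 0 ord0) -> regular_pt F x ->
    \rank (sff_kernel F x) = k.+1.

(* rho_t X_j = projection of X_j'(t) onto D_t^perp (X orthonormal) *)
Definition rho (k N : nat) (X : 'I_k.+1 -> R -> 'rV[R]_N) (j : 'I_k.+1) (t : R)
  : 'rV[R]_N :=
  derive1 (X j) t - \sum_(i < k.+1) dotv (derive1 (X j) t) (X i t) *: X i t.

(* degree of D at t: rank of sum_j c_j X_j |-> sum_j c_j rho X_j, i.e. the rank of
   the matrix of this map in the basis (X_j) *)
Definition degree (k N : nat) (X : 'I_k.+1 -> R -> 'rV[R]_N) (t : R) : nat :=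
  \rank (\matrix_(j < k.+1) rho X j t).

(* Striction function f.  Indexing: X ord0 plays the role of X_{m-1};
   X (lift ord0 i), i : 'I_k, play X_1 .. X_{m-2}. *)
Definition striction_f (k N : nat) (gamma : R -> 'rV[R]_N) (X : 'I_k.+1 -> R -> 'rV[R]_N)
  (t : R) (u : 'rV[R]_k) : R :=
  - (dotv (derive1 gamma t) (rho X ord0 t)
     + \sum_(i < k) u 0 i * dotv (derive1 (X (lift ord0 i)) t) (rho X ord0 t))
  / dotv (rho X ord0 t) (rho X ord0 t).

(* the parameter point (t, u^1..u^{m-2}, s) with s the coefficient of X_{m-1} *)
Definition param_pt (k : nat) (t s : R) (u : 'rV[R]_k) : 'rV[R]_k.+2 :=
  row_mx (t%:M : 'rV[R]_1) (row_mx (s%:M : 'rV[R]_1) u).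

End Ruled.

(* Suppose the striction point x = (t, u, f(t,u)) were regular.  By the
   defining property of f the velocity d_t sigma(x) is orthogonal to
   rho := rho_t X_{m-1}; so are the rulings X_j, hence the whole tangent space
   at x.  The coordinate matrix of the second fundamental form vanishes on
   pairs of ruling directions, while its (t, X_{m-1}) entries both equal the
   normal part of X_{m-1}'(t), which is nonzero because X_{m-1}'(t) has inner
   product |rho|^2 <> 0 with rho.  This hyperbolic 2x2 block forces the kernel
   of the second fundamental form to have dimension at most m - 2, against the
   rank-one hypothesis. *)

From HB Require Import structures.
From mathcomp Require Import all_boot all_order all_algebra.
From mathcomp Require Import all_classical all_reals all_analysis.
Import Order.TTheory GRing.Theory Num.Theory.
Import numFieldNormedType.Exports.
From mathcomp Require Import zify.

Set Implicit Arguments.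
Unset Strict Implicit.
Unset Printing Implicit Defensive.
Local Open Scope ring_scope.

Section Euclidean.
Variable R : realType.

Lemma dotvC N (a b : 'rV[R]_N) : dotv a b = dotv b a.
Proof. by apply: eq_bigr => i _; rewrite mulrC. Qed.

Lemma dotv0l N (c : 'rV[R]_N) : dotv 0 c = 0.
Proof. by rewrite /dotv big1 // => i _; rewrite mxE mul0r. Qed.

Lemma dotvDl N (a b c : 'rV[R]_N) : dotv (a + b) c = dotv a c + dotv b c.
Proof. by rewrite /dotv -big_split; apply: eq_bigr => i _; rewrite !mxE mulrDl. Qed.

Lemma dotvNl N (a c : 'rV[R]_N) : dotv (- a) c = - dotv a c.
Proof. by rewrite /dotv -sumrN; apply: eq_bigr => i _; rewrite !mxE mulNr. Qed.

Lemma dotvBl N (a b c : 'rV[R]_N) : dotv (a - b) c = dotv a c - dotv b c.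
Proof. by rewrite dotvDl dotvNl. Qed.

Lemma dotvZl N r (a c : 'rV[R]_N) : dotv (r *: a) c = r * dotv a c.
Proof. by rewrite /dotv mulr_sumr; apply: eq_bigr => i _; rewrite !mxE mulrA. Qed.

Lemma dotv_suml N n (a : 'I_n -> 'rV[R]_N) c :
  dotv (\sum_(i < n) a i) c = \sum_(i < n) dotv (a i) c.
Proof.
elim/big_rec2: _ => [|i y1 y2 _ <-]; last by rewrite dotvDl.
exact: dotv0l.
Qed.

Lemma dotvv_eq0 N (a : 'rV[R]_N) : (dotv a a == 0) = (a == 0).
Proof.
apply/eqP/eqP => [aa0|->]; last exact: dotv0l.
apply/rowP => i; rewrite mxE; apply/eqP.
move/eqP: aa0; rewrite psumr_eq0 => [/allP/(_ i (mem_index_enum _))|j _].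
  by rewrite mulf_eq0 orbb.
by rewrite -expr2 sqr_ge0.
Qed.

Lemma mul_tr_dotv N (v w : 'rV[R]_N) : v *m w^T = (dotv v w)%:M.
Proof.
apply/matrixP => i j; rewrite !ord1 !mxE eqxx mulr1n.
by apply: eq_bigr => l _; rewrite mxE.
Qed.

(* Pairing the columns 0 and 1 of the form with [w] gives two linear
   conditions on its null space; on the rows 1 and 0 they form a triangular
   matrix with diagonal [|w|^2], so they are independent. *)
Lemma rank_null_space_hyperbolic M N (S : 'I_M.+2 -> 'I_M.+2 -> 'rV[R]_N)
    (w : 'rV[R]_N) :
  w != 0 -> S ord0 (lift ord0 ord0) = w -> S (lift ord0 ord0) ord0 = w ->
  S (lift ord0 ord0) (lift ord0 ord0) = 0 ->
  (\rank (\bigcap_(j < M.+2) kermx (\matrix_(i < M.+2) S i j))%MS <= M)%N.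
Proof.
move=> w_neq0 S01 S10 S11.
pose A j := \matrix_(i < M.+2) S i j.
pose K := (\bigcap_(j < M.+2) kermx (A j))%MS.
have KA j : K *m A j = 0.
  by apply/sub_kermxP; move/sub_bigcapmxP: (submx_refl K) => /(_ j isT).
pose C := row_mx (A ord0 *m w^T) (A (lift ord0 ord0) *m w^T).
have KC : K *m C = 0 by rewrite mul_mx_row !mulmxA !KA !mul0mx row_mx0.
have rankK : (\rank K <= M.+2 - \rank C)%N.
  by rewrite -mxrank_ker; apply: mxrankS; apply/sub_kermxP.
have deltaA i j : delta_mx 0 i *m A j = S i j by rewrite -rowE rowK.
pose P := col_mx (delta_mx 0 (lift ord0 ord0) : 'rV[R]_M.+2)
                  (delta_mx 0 ord0 : 'rV[R]_M.+2).
have PC : P *m C =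
    block_mx (dotv w w)%:M 0 (dotv (S ord0 ord0) w)%:M (dotv w w)%:M.
  rewrite block_mxEv mul_col_mx !mul_mx_row !mulmxA !deltaA !mul_tr_dotv.
  by rewrite S10 S11 S01 dotv0l raddf0.
have ww_neq0 : dotv w w != 0 by rewrite dotvv_eq0.
have rankC : (2 <= \rank C)%N.
  have <- : \rank (P *m C) = 2%N.
    apply: mxrank_unit.
    by rewrite unitmxE PC det_lblock !det_scalar1 unitfE mulf_neq0.
  exact: mxrankM_maxr.
rewrite -/K; lia.
Qed.

End Euclidean.

Section Derivatives.
Variable R : realType.

Lemma derive_along_line M N (f : 'rV[R]_M -> 'rV[R]_N) a v (g : R -> 'rV[R]_N) :
  (forall h, f (h *: v + a) = g h) -> derive f a v = derive1 g 0.
Proof.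
move=> fg; rewrite /derive /derive1.
have -> : f a = g 0 by rewrite -fg scale0r add0r.
suff -> : (fun h : R => h^-1 *: ((f \o shift a) (h *: v) - g 0))
  = (fun h => h^-1 *: (g (h + 0) - g 0)) by [].
by rewrite funeqE => h /=; rewrite addr0 fg.
Qed.

Lemma derive1_affine N (c w : 'rV[R]_N) : derive1 (fun h => c + h *: w) 0 = w.
Proof.
rewrite /derive1; apply: lim_near_cst => //; near=> h.
have h_neq0 : h != 0 by near: h; exact: nbhs_dnbhs_neq.
by rewrite addr0 scale0r addr0 addrC addKr scalerA mulVf // scale1r.
Unshelve. all: by end_near.
Qed.

Lemma is_derive_shift N (f : R -> 'rV[R]_N) t :
  derivable f t 1 -> is_derive (0 : R) 1 (fun h => f (h + t)) (derive1 f t).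
Proof.
move=> df.
have E : (fun h : R => h^-1 *: (((fun h => f (h + t)) \o shift 0) (h *: 1)
             - f (0 + t)))
   = (fun h => h^-1 *: ((f \o shift t) (h *: 1) - f t)).
  by apply: funext => h /=; rewrite addr0 add0r.
by split; rewrite /derivable ?derive1E /derive E.
Qed.

End Derivatives.

Section RuledDerivatives.
Variables (R : realType) (k N : nat).
Variables (gamma : R -> 'rV[R]_N) (X : 'I_k.+1 -> R -> 'rV[R]_N).
Local Notation sigma := (ruled gamma X).

Lemma shift_ruling_t (x : 'rV[R]_k.+2) j h :
  (h *: delta_mx 0 (lift ord0 j) + x) 0 ord0 = x 0 ord0.
Proof. by rewrite !mxE eqxx (negbTE (neq_lift _ _)) mulr0 add0r. Qed.

Lemma sum_shift_ruling (Y : 'I_k.+1 -> 'rV[R]_N) (x : 'rV[R]_k.+2) j h :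
  \sum_(i < k.+1) (h *: delta_mx 0 (lift ord0 j) + x) 0 (lift ord0 i) *: Y i
  = h *: Y j + \sum_(i < k.+1) x 0 (lift ord0 i) *: Y i.
Proof.
under eq_bigr do rewrite !mxE eqxx /= (inj_eq lift_inj) scalerDl.
rewrite big_split /= (bigD1 j) //= eqxx mulr1 big1 ?addr0 // => i /negbTE ->.
by rewrite mulr0 scale0r.
Qed.

Lemma derive_ruled_ruling (x : 'rV[R]_k.+2) j :
  derive sigma x (delta_mx 0 (lift ord0 j)) = X j (x 0 ord0).
Proof.
rewrite (@derive_along_line _ _ _ _ _ _ (fun h => sigma x + h *: X j (x 0 ord0))).
  exact: derive1_affine.
by move=> h; rewrite /ruled shift_ruling_t sum_shift_ruling addrCA addrC.
Qed.

Lemma derive_ruled_t (x : 'rV[R]_k.+2) (t := x 0 ord0) :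
  derivable gamma t 1 -> (forall j, derivable (X j) t 1) ->
  derive sigma x (delta_mx 0 ord0) =
  derive1 gamma t + \sum_(j < k.+1) x 0 (lift ord0 j) *: derive1 (X j) t.
Proof.
move=> dgamma dX.
pose G j := x 0 (lift ord0 j) \*: (fun h => X j (h + t)).
have dG j : is_derive (0 : R) 1 (G j) (x 0 (lift ord0 j) *: derive1 (X j) t).
  exact: is_deriveZ _ (is_derive_shift (dX j)).
have dsigma := is_deriveD (is_derive_shift dgamma) (is_derive_sum dG).
rewrite (@derive_along_line _ _ _ _ _ _
  ((fun h => gamma (h + t)) + \sum_(j < k.+1) G j)).
  by rewrite derive1E derive_val.
move=> h; rewrite /ruled !mxE eqxx /= mulr1 fct_sumE /=.
by congr (_ + _); apply: eq_bigr => j _; rewrite !mxE eqxx /= mulr0 add0r.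
Qed.

Lemma hess_ruled_rulings (x : 'rV[R]_k.+2) i j :
  hess sigma x (lift ord0 i) (lift ord0 j) = 0.
Proof.
rewrite /hess (eq_fun (fun y => derive_ruled_ruling y j)).
rewrite (@derive_along_line _ _ _ _ _ _ (fun h => X j (x 0 ord0) + h *: 0)).
  exact: derive1_affine.
by move=> h; rewrite shift_ruling_t scaler0 addr0.
Qed.

Lemma hess_ruled_t_ruling (x : 'rV[R]_k.+2) j :
  derivable (X j) (x 0 ord0) 1 ->
  hess sigma x ord0 (lift ord0 j) = derive1 (X j) (x 0 ord0).
Proof.
move=> dX; rewrite /hess (eq_fun (fun y => derive_ruled_ruling y j)).
rewrite (@derive_along_line _ _ _ _ _ _ (fun h => X j (h + x 0 ord0))).
  by rewrite derive1E; apply/derive_val/is_derive_shift.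
by move=> h; rewrite !mxE eqxx /= mulr1.
Qed.

Lemma hess_ruled_ruling_t (x : 'rV[R]_k.+2) j :
  derivable gamma (x 0 ord0) 1 -> (forall i, derivable (X i) (x 0 ord0) 1) ->
  hess sigma x (lift ord0 j) ord0 = derive1 (X j) (x 0 ord0).
Proof.
move=> dgamma dX; rewrite /hess.
rewrite (@derive_along_line _ _ _ _ _ _
  (fun h => derive sigma x (delta_mx 0 ord0) + h *: derive1 (X j) (x 0 ord0))).
  exact: derive1_affine.
move=> h; rewrite !derive_ruled_t ?shift_ruling_t //.
by rewrite sum_shift_ruling addrCA addrC.
Qed.

End RuledDerivatives.

Section ParamPoint.
Variables (R : realType) (k : nat) (t s : R) (u : 'rV[R]_k).

Lemma param_pt_t : param_pt t s u 0 ord0 = t.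
Proof.
have -> : (ord0 : 'I_k.+2) = lshift (1 + k) (ord0 : 'I_1) by apply: val_inj.
by apply: (etrans (row_mxEl _ _ _ _)); rewrite mxE eqxx mulr1n.
Qed.

Lemma param_pt_s : param_pt t s u 0 (lift ord0 ord0) = s.
Proof.
have -> : (lift ord0 ord0 : 'I_k.+2) = rshift 1 (lshift k (ord0 : 'I_1)).
  exact: val_inj.
apply: (etrans (row_mxEr _ _ _ _)); apply: (etrans (row_mxEl _ _ _ _)).
by rewrite mxE eqxx mulr1n.
Qed.

Lemma param_pt_u i :
  param_pt t s u 0 (lift ord0 (lift ord0 i)) = u 0 i.
Proof.
have -> : (lift ord0 (lift ord0 i) : 'I_k.+2) = rshift 1 (rshift 1 i).
  exact: val_inj.
by apply: (etrans (row_mxEr _ _ _ _)); exact: (etrans (row_mxEr _ _ _ _)).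
Qed.

End ParamPoint.

Section Striction.
Variables (R : realType) (k N : nat).
Variables (gamma : R -> 'rV[R]_N) (X : 'I_k.+1 -> R -> 'rV[R]_N) (t : R).
Hypothesis X_orthonormal : forall i j, dotv (X i t) (X j t) = (i == j)%:R.

Local Notation rho0 := (rho X ord0 t).

Lemma dotv_ruling_rho i : dotv (X i t) rho0 = 0.
Proof.
rewrite dotvC /rho dotvBl dotv_suml.
under eq_bigr do rewrite dotvZl X_orthonormal.
rewrite (bigD1 i) //= eqxx mulr1 big1 ?addr0 ?subrr // => l /negbTE ->.
by rewrite mulr0.
Qed.

Lemma dotv_derive1_rho : dotv (derive1 (X ord0) t) rho0 = dotv rho0 rho0.
Proof.
rewrite {2}/rho dotvBl dotv_suml big1 ?subr0 // => l _.
by rewrite dotvZl dotv_ruling_rho mulr0.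
Qed.

Hypotheses (rho0_neq0 : rho0 != 0) (dgamma : derivable gamma t 1).
Hypothesis dX : forall j, derivable (X j) t 1.

Variable u : 'rV[R]_k.
Let x := param_pt t (striction_f gamma X t u) u.
Let J := jac (ruled gamma X) x.

Lemma row_jac i : row i J = derive (ruled gamma X) x (delta_mx 0 i).
Proof. by rewrite rowK. Qed.

Lemma dotv_striction_velocity_rho : dotv (row ord0 J) rho0 = 0.
Proof.
have rr_neq0 : dotv rho0 rho0 != 0 by rewrite dotvv_eq0.
rewrite row_jac derive_ruled_t param_pt_t //.
rewrite dotvDl dotv_suml; under eq_bigr do rewrite dotvZl.
rewrite big_ord_recl param_pt_s dotv_derive1_rho.
under eq_bigr do rewrite param_pt_u.
by rewrite /striction_f divfK // opprD subrK subrr.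
Qed.

Lemma dotv_tangent_rho (v : 'rV[R]_k.+2) : dotv (v *m J) rho0 = 0.
Proof.
rewrite mulmx_sum_row dotv_suml big_ord_recl.
rewrite dotvZl dotv_striction_velocity_rho mulr0 add0r big1 // => i _.
by rewrite dotvZl row_jac derive_ruled_ruling param_pt_t dotv_ruling_rho mulr0.
Qed.

Lemma nproj_derive1_neq0 : nproj J (derive1 (X ord0) t) != 0.
Proof.
rewrite /nproj subr_eq0; apply/eqP => dX0_tangent.
move: rho0_neq0; rewrite -dotvv_eq0 -dotv_derive1_rho dX0_tangent.
by rewrite dotv_tangent_rho eqxx.
Qed.

Lemma striction_pt_singular :
  (forall y : 'rV[R]_k.+2, y 0 ord0 = t -> regular_pt (ruled gamma X) y ->
     \rank (sff_kernel (ruled gamma X) y) = k.+1) ->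
  singular_pt (ruled gamma X) x.
Proof.
move=> rank_one_at_t; apply/negP => x_regular.
have x_t : x 0 ord0 = t := param_pt_t _ _ _.
have dgamma_x : derivable gamma (x 0 ord0) 1 by rewrite x_t; apply: dgamma.
have dX_x j : derivable (X j) (x 0 ord0) 1 by rewrite x_t; apply: dX.
have := rank_one_at_t x x_t x_regular.
rewrite /sff_kernel mxrankMfree // => rank_kernel.
have := rank_null_space_hyperbolic (S := sff (ruled gamma X) x)
  nproj_derive1_neq0.
rewrite rank_kernel ltnn => hyperbolic_bound.
suff : false by []; apply: hyperbolic_bound; rewrite /sff.
- rewrite hess_ruled_t_ruling; last exact: dX_x.
  by rewrite x_t -/J.
- rewrite hess_ruled_ruling_t; [|exact: dgamma_x|exact: dX_x].
  by rewrite x_t -/J.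
- by rewrite hess_ruled_rulings /nproj !mul0mx subr0.
Qed.

End Striction.

Theorem mainTheorem7 (R : realType) (k n : nat) (a b : \bar R)
  (gamma : R -> 'rV[R]_(k.+2 + n)) (X : 'I_k.+1 -> R -> 'rV[R]_(k.+2 + n)) :
  smooth_on (in_interval a b) gamma ->
  (forall j, smooth_on (in_interval a b) (X j)) ->
  (forall t, in_interval a b t -> dotv (derive1 gamma t) (derive1 gamma t) = 1) ->
  (forall t, in_interval a b t -> forall i j : 'I_k.+1,
      dotv (X i t) (X j t) = (i == j)%:R) ->
  rank_one (in_interval a b) (ruled gamma X) ->
  (forall t, in_interval a b t -> degree X t = 1%N) ->
  (forall t, in_interval a b t -> rho X ord0 t != 0) ->
  forall (t : R) (u : 'rV[R]_k), in_interval a b t ->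
    singular_pt (ruled gamma X) (param_pt t (striction_f gamma X t u) u).
Proof.
move=> smooth_gamma smooth_X _ orthonormal rank_one_sigma _ rho_neq0 t u It.
apply: (striction_pt_singular (orthonormal t It) (rho_neq0 t It)
  (smooth_gamma 0%N t It) (fun j => smooth_X j 0%N t It)) => y yt.
by apply: rank_one_sigma; rewrite yt.
Qed.
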